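(* Let $A_S$ be a parabolic-retractable Artin group with Coxeter matrix $(m_{s,t})_{s,t\in S}$, and let $a,b,c\in S$ be pairwise distinct. If $m_{a,b}$ is odd and $m_{a,c}$ is even, then $m_{b,c}$ is even.
   Context: A Coxeter matrix over a finite set $S$ is a matrix $M=(m_{s,t})_{s,t\in S}$ with entries in $\mathbb{N}\cup\{\infty\}$, $m_{s,s}=1$, and $m_{s,t}=m_{t,s}\ge 2$ for $s\neq t$. Write $\Pi(s,t,m)$ for the alternating word $sts\cdots$ of length $m$. The Artin group is $A_S=\langle S\mid \Pi(s,t,m_{s,t})=\Pi(t,s,m_{s,t})$ for $s\neq t$, $m_{s,t}\neq\infty\rangle$. For $X\subseteq S$, $A_X$ is the subgroup generated by $X$. A retraction of $G$ onto a subgroup $H$ is a homomorphism $\varphi:G\to H$ with $\varphi|_H=\mathrm{id}_H$. $A_S$ is parabolic-retractable if it admits a retraction onto $A_X$ for every $X\subseteq S$. ''Odd'' and ''even'' refer to finite integers ($\infty$ is neither). *)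

From mathcomp Require Import all_boot.
Set Implicit Arguments. Unset Strict Implicit. Unset Printing Implicit Defensive.

(* Coxeter matrix over a finite set S: entries in N ∪ {∞}, None = ∞. *)
Definition coxeter_matrix (S : finType) (m : S -> S -> option nat) : Prop :=
  (forall s, m s s = Some 1) /\
  (forall s t, m s t = m t s) /\
  (forall s t, s != t -> forall k, m s t = Some k -> 2 <= k).

(* Words in S ∪ S^{-1}: (s, false) = s, (s, true) = s^{-1}. *)
Definition word (S : finType) := seq (S * bool).

Fixpoint Pi (S : finType) (s t : S) (k : nat) : word S :=
  match k with
  | 0 => [::]
  | k'.+1 => (s, false) :: Pi t s k'
  end.

Inductive artin_eq (S : finType) (m : S -> S -> option nat) : word S -> word S -> Prop :=
  | ae_refl u : artin_eq m u u
  | ae_sym u v : artin_eq m u v -> artin_eq m v u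
  | ae_trans u v w : artin_eq m u v -> artin_eq m v w -> artin_eq m u w
  | ae_cat u u' v v' : artin_eq m u u' -> artin_eq m v v' -> artin_eq m (u ++ v) (u' ++ v')
  | ae_inv s b : artin_eq m [:: (s, b); (s, ~~ b)] [::]
  | ae_rel s t k : s != t -> m s t = Some k -> artin_eq m (Pi s t k) (Pi t s k).

Definition in_parabolic (S : finType) (m : S -> S -> option nat) (X : {set S}) (w : word S) : Prop :=
  exists w', artin_eq m w w' /\ all (fun p => p.1 \in X) w'.

(* A retraction of A_S onto A_X: a homomorphism A_S -> A_S (given on
   representatives, compatible with the congruence and multiplicative),
   with image in A_X and restricting to the identity on A_X. *)
Definition retraction_onto (S : finType) (m : S -> S -> option nat) (X : {set S})
    (phi : word S -> word S) : Prop :=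
  (forall u v, artin_eq m u v -> artin_eq m (phi u) (phi v)) /\
  (forall u v, artin_eq m (phi (u ++ v)) (phi u ++ phi v)) /\
  (forall u, in_parabolic m X (phi u)) /\
  (forall u, in_parabolic m X u -> artin_eq m (phi u) u).

Definition parabolic_retractable (S : finType) (m : S -> S -> option nat) : Prop :=
  forall X : {set S}, exists phi : word S -> word S, retraction_onto m X phi.

(* Words act on K^S through reflections sigma_s x = x - B(alpha_s, x) alpha_s,
   where B(alpha_s, alpha_t) is 2 for s = t and -beta_st otherwise.  If
   beta_st = u + u^-1 with u^(2 m_st) = 1 and u^2 <> 1, then sigma_t sigma_s
   moves every vector inside the plane of alpha_s, alpha_t, on which it has the
   eigenvalues u^2 and u^-2; hence (sigma_t sigma_s)^m_st = 1, the braid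
   relations hold and we get a representation rho of A_S.  Over algC we take u
   a primitive 2m-th root of unity for odd m and u = i for even m, so that an
   even edge gives commuting reflections.  For a retraction phi onto A_X,
   rho o phi is again a representation, with values in rho(A_X).

   If m_bc were odd, then g a g^-1 = c for some g, through the odd edges.
   Retracting onto A_{a,c}, rho(phi g) commutes with sigma_a, since sigma_a and
   sigma_c commute; so sigma_a = sigma_c, which fails on alpha_a.

   If m_bc were infinite, take beta_bc = 2: then rho(A_{b,c}) fixes
   delta = alpha_b + alpha_c and sends alpha_b to +-alpha_b + 2j delta.
   Retracting onto A_{b,c}, x = rho(phi a) is conjugate to sigma_b there, so
   x alpha_b = -alpha_b + 4j delta, and x sigma_c, sigma_c x translate alpha_b
   by the opposite nonzero multiples +-(2 - 4j) delta.  This contradicts the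
   image of the relation (ac)^n = (ca)^n, where m_ac = 2n. *)

From HB Require Import structures.
From mathcomp Require Import all_boot all_algebra algC cyclotomic.
From mathcomp Require Import ring zify.
Import GRing.Theory Num.Theory.

Set Implicit Arguments. Unset Strict Implicit. Unset Printing Implicit Defensive.
Local Open Scope ring_scope.

Notation gen s := [:: (s, false)].

Lemma Pi_odd_rcons (S : finType) (s t : S) k :
  odd k -> Pi s t k = Pi s t k.-1 ++ gen s.
Proof.
move=> ok; rewrite -(odd_double_half k) ok add1n /=.
by elim: k./2 => //= n ->.
Qed.

Lemma lincomb_eigenbasis2 (K : fieldType) (V : lmodType K) (a b : V) (u p q : K) :
  u != 0 -> u ^+ 2 != 1 ->
  exists c1 c2, p *: a + q *: b = c1 *: (u *: b + a) + c2 *: (u^-1 *: b + a).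
Proof.
move=> u0 u2.
exists ((q - p * u^-1) / (u - u^-1)), (p - (q - p * u^-1) / (u - u^-1)).
rewrite !scalerDr !scalerA addrACA -!scalerDl addrC (addrC (_ / _)) subrK.
congr (_ + _ *: _); field.
by rewrite u0 subr_eq0 -expr2.
Qed.

Section LinearIteration.
Variables (K : fieldType) (V : lmodType K) (T : {linear V -> V}).

Lemma iter_linearD n : {morph iter n T : x y / x + y}.
Proof. by move=> x y; elim: n => //= n ->; rewrite linearD. Qed.

Lemma iter_eigen v l n : T v = l *: v -> iter n T v = l ^+ n *: v.
Proof.
move=> Tv; elim: n => [|n IHn] /=; first by rewrite expr0 scale1r.
by rewrite IHn linearZ /= Tv scalerA -exprSr.
Qed.

Lemma sum_iter_eigen v l k : T v = l *: v -> l ^+ k = 1 -> l != 1 ->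
  \sum_(i < k) iter i T v = 0.
Proof.
move=> Tv lk l1; under eq_bigr do rewrite (iter_eigen _ Tv).
have := subrX1 l k; rewrite lk subrr => /esym/eqP.
by rewrite -scaler_suml mulf_eq0 subr_eq0 (negbTE l1) => /eqP ->; rewrite scale0r.
Qed.

Lemma iter_shift x y n : T x = x + y -> iter n T x = x + \sum_(i < n) iter i T y.
Proof.
move=> Txy; elim: n => [|n IHn]; first by rewrite big_ord0 addr0.
by rewrite iterS IHn linearD linear_sum Txy big_ord_recl -addrA.
Qed.

Lemma iter_period_eigen2 k v1 v2 l1 l2 :
  T v1 = l1 *: v1 -> T v2 = l2 *: v2 ->
  l1 ^+ k = 1 -> l1 != 1 -> l2 ^+ k = 1 -> l2 != 1 ->
  (forall x, exists c1 c2, T x = x + (c1 *: v1 + c2 *: v2)) ->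
  forall x, iter k T x = x.
Proof.
move=> Tv1 Tv2 l1k l1n1 l2k l2n1 shift x.
have eigenZ c v l : T v = l *: v -> T (c *: v) = l *: (c *: v).
  by move=> Tv; rewrite linearZ /= Tv !scalerA mulrC.
have [c1 [c2 Tx]] := shift x.
rewrite (iter_shift _ Tx); under eq_bigr do rewrite iter_linearD.
rewrite big_split (sum_iter_eigen (eigenZ c1 _ _ Tv1)) //.
by rewrite (sum_iter_eigen (eigenZ c2 _ _ Tv2)) //= !addr0.
Qed.

Lemma iter_translation p v d n : T p = p + d *: v -> T v = v ->
  iter n T p = p + (n%:R * d) *: v.
Proof.
move=> Tp Tv; elim: n => [|n IHn]; first by rewrite mul0r scale0r addr0.
by rewrite iterS IHn linearD linearZ /= Tp Tv -addrA -scalerDl mulrSr mulrDl mul1r (addrC d).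
Qed.

End LinearIteration.

Section Reflections.
Variables (K : fieldType) (S : finType) (beta : S -> S -> K).
Local Notation V := {ffun S -> K^o}.

(* Lets [ring] see scaling on the regular module [K^o]. *)
Lemma scaleE (a : K) (x : V) r : (a *: x) r = a * x r.
Proof. by rewrite ffunE. Qed.

Definition alpha (s : S) : V := [ffun r => (r == s)%:R].
Definition cartan (s t : S) : K := if s == t then 2 else - beta s t.
Definition form (s : S) (x : V) : K := \sum_r cartan s r * x r.

Fact form_is_scalar s : scalar (form s).
Proof.
move=> a x y; rewrite /form mulr_sumr -big_split; apply: eq_bigr => r _.
by rewrite !ffunE mulrDr mulrCA.
Qed.
HB.instance Definition _ s :=
  GRing.isLinear.Build K V K *%R (form s) (form_is_scalar s).

Lemma form_alpha s t : form s (alpha t) = cartan s t.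
Proof.
rewrite /form (bigD1 t) //= ffunE eqxx mulr1 big1 ?addr0 // => r /negbTE rt.
by rewrite ffunE rt mulr0.
Qed.

Definition refl (s : S) (x : V) : V := x - form s x *: alpha s.

Fact refl_is_linear s : linear (refl s).
Proof.
by move=> a x y; rewrite /refl linearP /= scalerDl -scalerA scalerBr addrACA opprD.
Qed.
HB.instance Definition _ s :=
  GRing.isLinear.Build K V V *:%R (refl s) (refl_is_linear s).

Lemma refl_alpha s t : refl s (alpha t) = alpha t - cartan s t *: alpha s.
Proof. by rewrite /refl form_alpha. Qed.

Lemma refl_alpha_self s : refl s (alpha s) = - alpha s.
Proof. by rewrite refl_alpha /cartan eqxx scaler_nat mulr2n opprD addrA subrr sub0r. Qed.

Lemma reflK s : involutive (refl s).
Proof.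
move=> x; rewrite {2}/refl linearB linearZ /= refl_alpha_self scalerN opprK.
by rewrite /refl subrK.
Qed.

Lemma refl_commute s t : cartan s t = 0 -> cartan t s = 0 ->
  forall x, refl s (refl t x) = refl t (refl s x).
Proof.
have reflE u v x : cartan u v = 0 ->
    refl u (refl v x) = x - form u x *: alpha u - form v x *: alpha v.
  by move=> uv; rewrite {2}/refl linearB linearZ /= refl_alpha uv scale0r subr0.
by move=> st ts x; rewrite reflE // reflE // addrAC.
Qed.

Fixpoint act (w : word S) : V -> V :=
  if w is l :: w' then refl l.1 \o act w' else id.

Fact act_is_linear w : linear (act w).
Proof. by elim: w => [|l w IHw] a x y //=; rewrite IHw linearP. Qed.
HB.instance Definition _ w :=
  GRing.isLinear.Build K V V *:%R (act w) (act_is_linear w).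

Lemma act_cat u v x : act (u ++ v) x = act u (act v x).
Proof. by elim: u => //= l u ->. Qed.

Lemma act_revK w : cancel (act (rev w)) (act w).
Proof.
elim: w => [|l w IHw] x //=.
by rewrite rev_cons -cats1 act_cat /= IHw reflK.
Qed.

Lemma act_revKV w : cancel (act w) (act (rev w)).
Proof. by move=> x; rewrite -{2}(revK w) act_revK. Qed.

Lemma act_commute (f : V -> V) w :
  (forall l x, l \in w -> refl l.1 (f x) = f (refl l.1 x)) ->
  forall x, act w (f x) = f (act w x).
Proof.
elim: w => [|l w IHw] //= fw x.
by rewrite IHw ?fw ?mem_head // => l' y l'w; rewrite fw // in_cons l'w orbT.
Qed.

Lemma refl_rotation_eigen s t u : s != t -> u != 0 ->
  beta s t = u + u^-1 -> beta t s = u + u^-1 ->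
  refl t (refl s (u *: alpha t + alpha s)) = u ^+ 2 *: (u *: alpha t + alpha s).
Proof.
move=> st u0 bst bts; have ts : (t == s) = false by rewrite eq_sym (negbTE st).
have -> : refl s (u *: alpha t + alpha s) = u *: alpha t + u ^+ 2 *: alpha s.
  rewrite linearD linearZ /= !refl_alpha /cartan eqxx (negbTE st) bst.
  by apply/ffunP => r; rewrite !(scaleE, ffunE); field.
rewrite [refl t _]linearD !linearZ /= !refl_alpha /cartan eqxx ts bts.
by apply/ffunP => r; rewrite !(scaleE, ffunE); field.
Qed.

Lemma refl_rotation_shift s t x :
  refl t (refl s x) = x + (- form s x *: alpha s + - form t (refl s x) *: alpha t).
Proof. by rewrite {1}/refl {1}/refl !scaleNr addrA. Qed.

Lemma refl_rotation_period s t k u : s != t ->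
  beta s t = u + u^-1 -> beta t s = u + u^-1 -> u ^+ k.*2 = 1 -> u ^+ 2 != 1 ->
  iter k (refl t \o refl s) =1 id.
Proof.
move=> st bst bts uk u2; case: k uk => [|k] uk x //.
have u0 : u != 0.
  by apply/eqP => u0; move: uk; rewrite u0 expr0n double_eq0 /= => /eqP; rewrite eq_sym oner_eq0.
have bstV : beta s t = u^-1 + u^-1^-1 by rewrite invrK addrC.
have btsV : beta t s = u^-1 + u^-1^-1 by rewrite invrK addrC.
have uVk : u^-1 ^+ 2 ^+ k.+1 = 1 by rewrite -exprM mul2n exprVn uk invr1.
apply: (iter_period_eigen2 (T := refl t \o refl s) (refl_rotation_eigen st u0 bst bts)
          (refl_rotation_eigen st (invr_neq0 u0) bstV btsV)) => //.
- by rewrite -exprM mul2n.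
- by rewrite exprVn invr_eq1.
move=> y; have [c1 [c2 E]] :=
  lincomb_eigenbasis2 (alpha s) (alpha t) (- form s y) (- form t (refl s y)) u0 u2.
by exists c1, c2; rewrite /= refl_rotation_shift E.
Qed.

Lemma act_Pi_double s t n : act (Pi s t n.*2) =1 iter n (refl s \o refl t).
Proof. by elim: n => [|n IHn] x //; rewrite doubleS /= IHn. Qed.

Lemma act_braid s t k :
  iter k (refl t \o refl s) =1 id -> act (Pi s t k) =1 act (Pi t s k).
Proof.
have rotK n : cancel (iter n (refl t \o refl s)) (iter n (refl s \o refl t)).
  by elim: n => // n IHn y; rewrite iterSr iterS /= !reflK.
rewrite -(odd_double_half k); case: (odd k); rewrite ?add1n ?add0n.
- move: k./2 => n period x; rewrite /= !act_Pi_double.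
  by rewrite -[in RHS](period x) -addnn -addnS iterD rotK iterS /= reflK.
- move: k./2 => n period x; rewrite !act_Pi_double.
  by rewrite -[in LHS](period x) -addnn iterD rotK.
Qed.

Definition braid_compatible (m : S -> S -> option nat) :=
  forall s t k, s != t -> m s t = Some k ->
  exists u, [/\ u ^+ k.*2 = 1, u ^+ 2 != 1 & beta s t = u + u^-1].

Hypothesis beta_sym : forall s t, beta s t = beta t s.

Lemma act_artin m : braid_compatible m -> forall u v, artin_eq m u v -> act u =1 act v.
Proof.
move=> compat u v; elim=> {u v} //.
- by move=> u v _ IH x; rewrite IH.
- by move=> u v w _ IHuv _ IHvw x; rewrite IHuv IHvw.
- by move=> u u' v v' _ IHu _ IHv x; rewrite !act_cat IHv IHu.
- by move=> s b x /=; rewrite reflK.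
move=> s t k st mst; have [u [uk u2 bst]] := compat s t k st mst.
by apply/act_braid/(refl_rotation_period st bst _ uk u2); rewrite -beta_sym.
Qed.

End Reflections.

Arguments alpha {K S}.

Definition prim_root (n : nat) : algC := sval (C_prim_root_exists (ltn0Sn n)).

Lemma prim_rootP n : (n.+1).-primitive_root (prim_root n).
Proof. by rewrite /prim_root; case: (C_prim_root_exists _). Qed.

Definition braid_root (k : nat) : algC := if odd k then prim_root k.*2.-1 else 'i.

Lemma braid_root_spec k : (2 <= k)%N ->
  braid_root k ^+ k.*2 = 1 /\ braid_root k ^+ 2 != 1.
Proof.
rewrite /braid_root; case: ifP => [_|/negbT ek] k2.
  have := prim_rootP k.*2.-1; rewrite prednK ?double_gt0 ?(ltnW k2) // => prim.
  split; first exact: prim_expr_order prim.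
  by rewrite -(prim_order_dvd prim); apply/negP => /dvdn_leq; lia.
split; first by rewrite -mul2n exprM sqrCi -signr_odd (negbTE ek).
by rewrite sqrCi eq_sym -addr_eq0 -mulr2n pnatr_eq0.
Qed.

Lemma braid_root_even k : ~~ odd k -> braid_root k + (braid_root k)^-1 = 0.
Proof. by rewrite /braid_root => /negbTE ->; rewrite invCi subrr. Qed.

(* Infinite entries impose no relation; only the pair {b, c} needs the
   affine value 2. *)
Definition artin_beta (S : finType) (m : S -> S -> option nat) (b c s t : S) : algC :=
  if m s t is Some k then braid_root k + (braid_root k)^-1
  else if [set s; t] == [set b; c] then 2 else 0.

Section ArtinBeta.
Variables (S : finType) (m : S -> S -> option nat) (b c : S).
Hypothesis hm : coxeter_matrix m.

Lemma artin_beta_sym s t : artin_beta m b c s t = artin_beta m b c t s.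
Proof. by rewrite /artin_beta hm.2.1 setUC. Qed.

Lemma artin_beta_compatible : braid_compatible (artin_beta m b c) m.
Proof.
move=> s t k st mst; have [uk u2] := braid_root_spec (hm.2.2 s t st k mst).
by exists (braid_root k); rewrite /artin_beta mst.
Qed.

Lemma cartan_even s t k : s != t -> m s t = Some k -> ~~ odd k ->
  cartan (artin_beta m b c) s t = 0.
Proof.
by move=> st mst ek; rewrite /cartan (negbTE st) /artin_beta mst braid_root_even ?oppr0.
Qed.

Lemma cartan_infinite : b != c -> m b c = None ->
  cartan (artin_beta m b c) b c = -2 /\ cartan (artin_beta m b c) c b = -2.
Proof.
move=> bc mbc; rewrite /cartan (negbTE bc) eq_sym (negbTE bc) /artin_beta.
by rewrite [m c b]hm.2.1 mbc eqxx (setUC [set c]) eqxx.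
Qed.

End ArtinBeta.

Section Retraction.
Variables (K : fieldType) (S : finType) (m : S -> S -> option nat) (beta : S -> S -> K).
Hypotheses (beta_sym : forall s t, beta s t = beta t s)
           (beta_compat : braid_compatible beta m).
Variables (X : {set S}) (phi : word S -> word S).
Hypothesis phi_retr : retraction_onto m X phi.

Local Notation rho w := (act beta (phi w)).
Let act_eq := act_artin beta_sym beta_compat.

Lemma rho_artin u v x : artin_eq m u v -> rho u x = rho v x.
Proof. by move=> uv; apply: act_eq; apply: phi_retr.1. Qed.

Lemma rho_cat u v x : rho (u ++ v) x = rho u (rho v x).
Proof. by rewrite -act_cat; apply: act_eq; apply: phi_retr.2.1. Qed.

Lemma rho_parabolic w x : all (fun l => l.1 \in X) w -> rho w x = act beta w x.
Proof.
move=> wX; apply: act_eq; apply: phi_retr.2.2.2.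
by exists w; split=> //; apply: ae_refl.
Qed.

Lemma rho_gen s x : s \in X -> rho (gen s) x = refl beta s x.
Proof. by move=> sX; rewrite rho_parabolic //= sX. Qed.

Lemma rho_parabolic_image w :
  exists2 w', all (fun l => l.1 \in X) w' & forall x, rho w x = act beta w' x.
Proof.
have [w' [ww' w'X]] := phi_retr.2.2.1 w.
by exists w' => // x; apply: act_eq.
Qed.

Lemma rho_Pi_double s t n x :
  rho (Pi s t n.*2) x = iter n (fun y => rho (gen s) (rho (gen t) y)) x.
Proof.
elim: n => [|n IHn]; first exact: (@rho_parabolic [::]).
by rewrite doubleS -[Pi s t _]/(gen s ++ gen t ++ Pi s t n.*2) !rho_cat IHn.
Qed.

Lemma rho_conj s t k x : s != t -> m s t = Some k -> odd k ->
  rho (Pi s t k.-1) (rho (gen s) x) = rho (gen t) (rho (Pi s t k.-1) x).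
Proof.
move=> st mst ok; rewrite -!rho_cat -Pi_odd_rcons //.
have -> : gen t ++ Pi s t k.-1 = Pi t s k by rewrite -[k in RHS](@prednK k) ?odd_gt0.
exact/rho_artin/ae_rel.
Qed.

End Retraction.

Section InfiniteDihedral.
Variables (K : fieldType) (S : finType) (beta : S -> S -> K) (b c : S).
Hypotheses (cartan_bc : cartan beta b c = -2) (cartan_cb : cartan beta c b = -2).
Local Notation V := {ffun S -> K^o}.
Local Notation delta := (alpha b + alpha c : V).

(* The evenness of the translation part separates the conjugates of
   [refl beta b] from [refl beta c]. *)
Definition Dinf (f : V -> V) : Prop :=
  f delta = delta /\
  exists (e : bool) (j : int), f (alpha b) = (-1) ^+ e *: alpha b + (2 * j%:~R) *: delta.

Lemma refl_delta s : s \in [set b; c] -> refl beta s delta = delta.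
Proof.
rewrite !inE => /orP[]/eqP-> ; rewrite /refl linearD /= !form_alpha.
  by rewrite cartan_bc /cartan eqxx addrN scale0r subr0.
by rewrite cartan_cb /cartan eqxx addNr scale0r subr0.
Qed.

Lemma refl_c_alpha_b : refl beta c (alpha b) = - alpha b + 2 *: delta.
Proof.
by rewrite refl_alpha cartan_cb; apply/ffunP => r; rewrite !(scaleE, ffunE); ring.
Qed.

Lemma act_Dinf w : all (fun l => l.1 \in [set b; c]) w -> Dinf (act beta w).
Proof.
elim: w => [|[s e0] w IHw] /=.
  by split=> //; exists false, 0; rewrite expr0 scale1r mulr0 scale0r addr0.
move=> /andP[sX /IHw[fd [e [j fa]]]]; split; first by rewrite /= fd refl_delta.
move: sX; rewrite !inE => /orP[]/eqP->.
  exists (~~ e), j; rewrite /= fa linearD !linearZ /= refl_alpha_self refl_delta ?inE ?eqxx //.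
  by rewrite signrN scaleNr scalerN.
exists (~~ e), ((-1) ^+ e + j); rewrite /= fa linearD !linearZ /= refl_c_alpha_b.
rewrite refl_delta ?inE ?eqxx ?orbT // signrN intrD intr_sign.
by apply/ffunP => r; rewrite !(scaleE, ffunE); ring.
Qed.

Lemma Dinf_conj_refl (f g : {linear V -> V}) : Dinf f -> cancel f g ->
  g delta = delta /\
  exists j : int, g (refl beta b (f (alpha b))) = - alpha b + (4 * j%:~R) *: delta.
Proof.
move=> [fd [e [j fa]]] fK; split; first by rewrite -{1}fd fK.
exists j; rewrite fa.
have -> : refl beta b ((-1) ^+ e *: alpha b + (2 * j%:~R) *: delta) =
          f (- alpha b + (4 * j%:~R) *: delta).
  rewrite [RHS]linearD [in RHS]linearN [in RHS]linearZ /= fa fd.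
  rewrite linearD !linearZ /= refl_alpha_self refl_delta ?inE ?eqxx //.
  by apply/ffunP => r; rewrite !(scaleE, ffunE); ring.
by rewrite fK.
Qed.

Lemma reflection_pair_translations (x : {linear V -> V}) t n :
  x delta = delta -> x (alpha b) = - alpha b + t *: delta ->
  iter n (x \o refl beta c) (alpha b) = alpha b + (n%:R * (2 - t)) *: delta /\
  iter n (refl beta c \o x) (alpha b) = alpha b + (n%:R * (t - 2)) *: delta.
Proof.
move=> xd xa; have cd : refl beta c delta = delta by rewrite refl_delta // !inE eqxx orbT.
split; apply: iter_translation => /=; rewrite ?cd ?xd //.
  rewrite refl_c_alpha_b linearD linearN linearZ /= xa xd.
  by apply/ffunP => r; rewrite !(scaleE, ffunE); ring.
rewrite xa linearD linearN linearZ /= refl_c_alpha_b cd.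
by apply/ffunP => r; rewrite !(scaleE, ffunE); ring.
Qed.

End InfiniteDihedral.

Lemma translations_differ (R : numDomainType) (n : nat) (j : int) : n != 0%N ->
  n%:R * (2 - 4 * j%:~R) != n%:R * (4 * j%:~R - 2) :> R.
Proof.
move=> n0; rewrite -subr_eq0 -mulrBr mulf_eq0 pnatr_eq0 (negbTE n0) /= opprB.
have -> : (2 - 4 * j%:~R) + (2 - 4 * j%:~R) = (4 - 8 * j)%:~R :> R.
  by rewrite intrB intrM; ring.
by rewrite intr_eq0; lia.
Qed.

Section OddEvenTriangle.
Variables (S : finType) (m : S -> S -> option nat).
Hypotheses (hm : coxeter_matrix m) (hret : parabolic_retractable m).
Variables (a b c : S) (kab kac : nat).
Hypotheses (hab : a != b) (hac : a != c) (hbc : b != c).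
Hypotheses (Hab : m a b = Some kab) (Hoab : odd kab).
Hypotheses (Hac : m a c = Some kac) (Heac : ~~ odd kac).

Local Notation beta := (artin_beta m b c).
Let beta_sym := artin_beta_sym b c hm.
Let beta_compat := artin_beta_compatible b c hm.

Lemma m_bc_not_odd kbc : m b c = Some kbc -> ~~ odd kbc.
Proof.
move=> Hbc; apply/negP => Hobc.
have [phi retr] := hret [set a; c].
have rgen := rho_gen beta_sym beta_compat retr.
have rconj := rho_conj beta_sym beta_compat retr.
have aX : a \in [set a; c] by rewrite !inE eqxx.
have cX : c \in [set a; c] by rewrite !inE eqxx orbT.
have cac : cartan beta a c = 0 := cartan_even b c hac Hac Heac.
have cca : cartan beta c a = 0.
  by apply: (cartan_even b c _ (etrans (hm.2.1 c a) Hac) Heac); rewrite eq_sym.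
set w := Pi b c kbc.-1 ++ Pi a b kab.-1.
have conj x : act beta (phi w) (refl beta a x) = refl beta c (act beta (phi w) x).
  rewrite !(rho_cat beta_sym beta_compat retr) -(rgen _ _ aX).
  by rewrite (rconj _ _ _ _ hab Hab Hoab) (rconj _ _ _ _ hbc Hbc Hobc) rgen.
have [w' w'X ww'] := rho_parabolic_image beta_sym beta_compat retr w.
have comm x : act beta w' (refl beta a x) = refl beta a (act beta w' x).
  apply: act_commute => l y /(allP w'X); rewrite !inE => /orP[]/eqP-> //.
  exact: refl_commute.
have := conj (act beta (rev w') (alpha a)); rewrite !ww' comm act_revK.
rewrite refl_alpha_self refl_alpha cca scale0r subr0 => /ffunP/(_ a).
by rewrite !ffunE eqxx => /eqP; rewrite eq_sym -addr_eq0 -mulr2n pnatr_eq0.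
Qed.

Lemma m_bc_finite : m b c <> None.
Proof.
move=> Hbc; have [cbc ccb] := cartan_infinite hm hbc Hbc.
have [phi retr] := hret [set b; c].
have rgen := rho_gen beta_sym beta_compat retr.
have bX : b \in [set b; c] by rewrite !inE eqxx.
have cX : c \in [set b; c] by rewrite !inE eqxx orbT.
set x := act beta (phi (gen a)).
set g := Pi a b kab.-1.
have [w' w'X gw'] := rho_parabolic_image beta_sym beta_compat retr g.
have xE y : x y = act beta (rev w') (refl beta b (act beta w' y)).
  rewrite -[LHS](act_revKV beta w') -gw' (rho_conj beta_sym beta_compat retr _ hab Hab Hoab).
  by rewrite (rgen _ _ bX) gw'.
have Dw' := act_Dinf cbc ccb w'X.
have [Vd [j Va]] := Dinf_conj_refl cbc ccb Dw' (act_revKV beta w').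
have xd : x (alpha b + alpha c) = alpha b + alpha c by rewrite xE Dw'.1 refl_delta.
have xa := etrans (xE _) Va.
have := rho_artin beta_sym beta_compat retr (alpha b) (ae_rel hac Hac).
rewrite -(odd_double_half kac) (negbTE Heac) add0n.
rewrite !(rho_Pi_double beta_sym beta_compat retr).
have xc : (fun y => x (act beta (phi (gen c)) y)) =1 x \o refl beta c.
  by move=> y; rewrite /= rgen.
have cx : (fun y => act beta (phi (gen c)) (x y)) =1 refl beta c \o x.
  by move=> y; rewrite /= rgen.
rewrite (eq_iter xc) (eq_iter cx).
have [-> ->] := reflection_pair_translations cbc ccb kac./2 xd xa.
move=> /ffunP/(_ c); rewrite !(scaleE, ffunE) eqxx eq_sym (negbTE hbc) /= !add0r !mulr1.
apply/eqP/translations_differ.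
by have := hm.2.2 a c hac kac Hac; rewrite -(odd_double_half kac) (negbTE Heac); lia.
Qed.

End OddEvenTriangle.

Local Close Scope ring_scope.
Unset Implicit Arguments.

Theorem lemma3p3 (S : finType) (m : S -> S -> option nat)
  (hm : coxeter_matrix m) (hret : parabolic_retractable m)
  (a b c : S) (hab : a != b) (hac : a != c) (hbc : b != c)
  (kab : nat) (Hab : m a b = Some kab) (Hoab : odd kab)
  (kac : nat) (Hac : m a c = Some kac) (Heac : ~~ odd kac) :
  exists kbc : nat, m b c = Some kbc /\ ~~ odd kbc.
Proof.
case Hbc: (m b c) => [kbc|]; last by case: (m_bc_finite hm hret hab hac hbc Hab Hoab Hac Heac).
by exists kbc; split=> //; apply: (m_bc_not_odd hm hret hab hac hbc Hab Hoab Hac Heac).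
Qed.
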